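(* Let $M=\mathbb{R}_{\max}$ and $R=s(M)$ be its symmetrization hyperfield. Let $f\in M[x_1,\dots,x_n]$ be a polynomial written as a sum $f=\sum_{i=1}^k m_i$ of $k\ge1$ monomials $m_i=c_iX^{I_i}$ with $c_i\in\mathbb{R}$ and pairwise distinct multi-indices $I_i\in\mathbb{N}^n$. For each $i$ let \[\tilde f_{\hat i}:=\sum_{j\neq i}(c_j,1)X^{I_j}+(c_i,-1)X^{I_i}\in R[x_1,\dots,x_n],\] let $V(\tilde f_{\hat i}):=\{z\in R^n\mid 0_R\in\tilde f_{\hat i}(z)\}$ and $HV(f):=\bigcup_{i=1}^kV(\tilde f_{\hat i})$. Let $\varphi=s^n:M^n\to R^n$ be the coordinatewise map $a\mapsto(a,1)$ (with $-\infty\mapsto 0_R$). Then $\varphi(\operatorname{trop}(V(f)))=HV(f)\cap\operatorname{Im}(\varphi)$; in particular $\varphi$ restricts to a bijection $\operatorname{trop}(V(f))\to HV(f)\cap\operatorname{Im}(\varphi)$.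
   Context: $\mathbb{R}_{\max}=(\mathbb{R}\cup\{-\infty\},\max,+)$ is the tropical semifield: its ''addition'' is $\max$ (zero element $0_M=-\infty$) and its ''multiplication'' is ordinary addition (unit $0$). For a monomial $m=cX^I$ and $a\in M^n$, $m(a)=c+\sum_l I_l a_l$ (ordinary arithmetic, with $-\infty$ absorbing). $\operatorname{trop}(V(f))$ is the set of $a\in M^n$ such that the value $\max_i m_i(a)$ is either $-\infty$ or is attained by at least two distinct indices $i$. The symmetrization $R=s(M)$ has elements $(t,1)$, $(t,-1)$ for $t\in\mathbb{R}$ together with $0_R=(-\infty,1)=(-\infty,-1)$; write $|(t,p)|=t$. Its hyperaddition is: for $x,y\in R$, $x+y=\{x\}$ if $|x|>|y|$ or $x=y$; $x+y=\{y\}$ if $|x|<|y|$; and if $|x|=|y|$ with opposite signs, $x+y=\{(t,\pm1)\mid t\le|x|\}$ (including $0_R$). Multiplication is $(t,p)(u,q)=(t+u,pq)$ with $0_R$ absorbing. $R$ is a hyperfield. For a polynomial $g=\sum_I a_IX^I$ over $R$ (finite formal sum, no repeated multi-index) and $z\in R^n$, the evaluation $g(z)$ is the subset $\sum_I a_Iz^I\subseteq R$ computed with the hyperaddition (sums of sets as $A+B=\bigcup_{a\in A,b\in B}a+b$). *)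

From mathcomp Require Import all_boot.
From Stdlib Require Import Reals.
Set Implicit Arguments. Unset Strict Implicit. Unset Printing Implicit Defensive.

(* None = -oo (the zero 0_M), Some t = the real t. *)
Definition M := option R.

Definition Mlt (x y : M) : Prop :=
  match x, y with
  | None, Some _ => True
  | Some s, Some t => (s < t)%R
  | _, _ => False
  end.
Definition Mle (x y : M) : Prop := Mlt x y \/ x = y.

Definition Mmul (x y : M) : M :=
  match x, y with Some s, Some t => Some (s + t)%R | _, _ => None end.

Definition mono_eval (n : nat) (c : R) (I : 'I_n -> nat) (a : 'I_n -> M) : M :=
  Mmul (Some c)
    (\big[Mmul/Some 0%R]_(l < n)
        (if I l == 0 then Some 0%R
         else match a l with Some t => Some (INR (I l) * t)%R | None => None end)).

(* trop(V(f)) for f = sum_{i<k} c_i X^{I_i}: the max of the m_i(a) is -oo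
   or attained by two distinct indices *)
Definition trop_V (n k : nat) (c : 'I_k -> R) (I : 'I_k -> 'I_n -> nat)
    (a : 'I_n -> M) : Prop :=
  (forall i, mono_eval (c i) (I i) a = None) \/
  exists i j : 'I_k, i <> j /\
    mono_eval (c i) (I i) a = mono_eval (c j) (I j) a /\
    forall l, Mle (mono_eval (c l) (I l) a) (mono_eval (c i) (I i) a).

(* None = 0_R ; Some (t, true) = (t,1) ; Some (t, false) = (t,-1). *)
Definition S := option (R * bool).

Definition sabs (x : S) : M :=
  match x with Some (t, _) => Some t | None => None end.

Definition opposite (x y : S) : Prop :=
  exists t, (x = Some (t, true) /\ y = Some (t, false)) \/
            (x = Some (t, false) /\ y = Some (t, true)).

(* hyperaddition: z \in x + y *)
Definition hadd (x y z : S) : Prop :=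
  (Mlt (sabs y) (sabs x) /\ z = x) \/
  (x = y /\ z = x) \/
  (Mlt (sabs x) (sabs y) /\ z = y) \/
  (opposite x y /\ Mle (sabs z) (sabs x)).

Definition smul (x y : S) : S :=
  match x, y with
  | Some (t, p), Some (u, q) => Some ((t + u)%R, p == q)
  | _, _ => None
  end.

Definition sone : S := Some (0%R, true).
Definition spow (x : S) (e : nat) : S := iter e (smul x) sone.

Definition setsum (A B : S -> Prop) : S -> Prop :=
  fun z => exists a b, A a /\ B b /\ hadd a b z.

Definition term_eval (n : nat) (coef : S) (I : 'I_n -> nat) (z : 'I_n -> S) : S :=
  smul coef (\big[smul/sone]_(l < n) spow (z l) (I l)).

Definition poly_eval (n k : nat) (coef : 'I_k -> S) (I : 'I_k -> 'I_n -> nat)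
    (z : 'I_n -> S) : S -> Prop :=
  foldr (fun j A => setsum (eq (term_eval (coef j) (I j) z)) A)
        (eq None) (enum 'I_k).

Definition ftilde_coef (k : nat) (c : 'I_k -> R) (i : 'I_k) : 'I_k -> S :=
  fun j => Some (c j, j != i).

Definition V_ftilde (n k : nat) (c : 'I_k -> R) (I : 'I_k -> 'I_n -> nat)
    (i : 'I_k) (z : 'I_n -> S) : Prop :=
  poly_eval (ftilde_coef c i) I z None.

Definition HV (n k : nat) (c : 'I_k -> R) (I : 'I_k -> 'I_n -> nat)
    (z : 'I_n -> S) : Prop :=
  exists i, V_ftilde c I i z.

Definition s_emb (x : M) : S :=
  match x with Some t => Some (t, true) | None => None end.
Definition phi (n : nat) (a : 'I_n -> M) : 'I_n -> S := fun l => s_emb (a l).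

(** The evaluation of a polynomial over the symmetrization hyperfield at a point with
    positive coordinates is the hypersum of its term values, and a hypersum of a list
    contains [0_R] exactly when all entries are [0_R] or two opposite entries attain the
    largest absolute value.  Flipping the sign of the [i]-th coefficient of [f] makes the
    value of the [i]-th term opposite to the value of any other term of equal absolute
    value, so [0_R] lies in some [tilde f_i(phi a)] iff the maximum of the [m_j(a)] is
    [-oo] or is attained twice, i.e. iff [a] lies in [trop(V(f))]. *)
From mathcomp Require Import all_boot.
From Stdlib Require Import Reals Lra FunctionalExtensionality.
From Stdlib Require List.
Set Implicit Arguments. Unset Strict Implicit.

Lemma Mlt_irrefl x : ~ Mlt x x.
Proof. by case: x => [s|] //=; lra. Qed.

Lemma Mlt_trans x y z : Mlt x y -> Mlt y z -> Mlt x z.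
Proof. by case: x => [s|]; case: y => [t|]; case: z => [u|] //=; lra. Qed.

Lemma Mle_trans x y z : Mle x y -> Mle y z -> Mle x z.
Proof. by move=> [xy|<-] [yz|<-]; [left; exact: Mlt_trans xy yz|left|left|right]. Qed.

Lemma Mle_lt_trans x y z : Mle x y -> Mlt y z -> Mlt x z.
Proof. by move=> [xy|->] // yz; exact: Mlt_trans xy yz. Qed.

Lemma Mle_total x y : Mle x y \/ Mlt y x.
Proof.
case: x => [s|]; case: y => [t|] /=; rewrite /Mle /=; try tauto.
by case: (Rtotal_order s t) => [|[->|]]; tauto.
Qed.

Lemma Mlt_Mle_False x y : Mlt x y -> Mle y x -> False.
Proof. by move=> xy /(Mle_lt_trans)/(_ xy)/Mlt_irrefl. Qed.

Lemma Mle_refl x : Mle x x.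
Proof. by right. Qed.

Lemma Mle_bot x : Mle None x.
Proof. by case: x => [s|]; [left|right]. Qed.

Lemma Mle_bot_eq x : Mle x None -> x = None.
Proof. by case: x => [s|] // []. Qed.

Definition signed (v : M) (p : bool) : S :=
  if v is Some t then Some (t, p) else None.

Definition sopp (x : S) : S :=
  if x is Some (t, p) then Some (t, ~~ p) else None.

Lemma sabs_None x : sabs x = None -> x = None.
Proof. by case: x => [[]|]. Qed.

Lemma sabs_signed v p : sabs (signed v p) = v.
Proof. by case: v. Qed.

Lemma sabs_sopp x : sabs (sopp x) = sabs x.
Proof. by case: x => [[]|]. Qed.

Lemma opposite_sabs x y : opposite x y -> sabs x = sabs y.
Proof. by case=> t [[-> ->]|[-> ->]]. Qed.

Lemma opposite_sym x y : opposite x y -> opposite y x.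
Proof. by case=> t [[-> ->]|[-> ->]]; exists t; [right|left]. Qed.

Lemma opposite_neq x y : opposite x y -> x <> y.
Proof. by case=> t [[-> ->]|[-> ->]]. Qed.

Lemma opposite_neq_None x y : opposite x y -> y <> None.
Proof. by case=> t [[_ ->]|[_ ->]]. Qed.

Lemma opposite_signed v p : v <> None -> opposite (signed v p) (signed v (~~ p)).
Proof. by case: v => // t _; exists t; case: p; [left|right]. Qed.

Lemma sabs_eq x y : sabs x = sabs y -> x = y \/ opposite x y.
Proof.
case: x => [[s p]|]; case: y => [[t q]|] //=; last by left.
case=> <-; case: p; case: q; try by left.
- by right; exists s; left.
- by right; exists s; right.
Qed.

Lemma hadd_cases x y z : hadd x y z ->
  (Mle (sabs y) (sabs x) /\ z = x) \/ (Mle (sabs x) (sabs y) /\ z = y) \/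
  (opposite x y /\ Mle (sabs z) (sabs x)).
Proof.
case=> [[yx ->]|[[-> ->]|[[xy ->]|xy]]].
- by left; split; first left.
- by left; split; first right.
- by right; left; split; first left.
- by right; right.
Qed.

Lemma hadd_le_max x y z m : hadd x y z ->
  Mle (sabs x) m -> Mle (sabs y) m -> Mle (sabs z) m.
Proof.
by case/hadd_cases=> [[_ ->]|[[_ ->]|[_ zx]]] // xm _; exact: Mle_trans zx xm.
Qed.

Lemma hadd_left x y : Mle (sabs y) (sabs x) -> hadd x y x.
Proof.
case=> [yx|/esym/sabs_eq [<-|xy]]; first by left.
- by right; left.
- by do 3 right; split=> //; right.
Qed.

Lemma hadd_right x y : Mle (sabs x) (sabs y) -> hadd x y y.
Proof.
case=> [xy|/sabs_eq [<-|xy]]; first by do 2 right; left.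
- by right; left.
- by do 3 right; split; last by rewrite (opposite_sabs xy); right.
Qed.

Lemma hadd_sopp x z : Mle (sabs z) (sabs x) -> hadd x (sopp x) z.
Proof.
case: x => [[t p]|] zx.
  by do 3 right; split=> //; exact: (@opposite_signed (Some t) p).
by case: z zx => [[u q] /Mle_bot_eq|]; [|right; left].
Qed.

Definition hsum (ts : seq S) : S -> Prop :=
  foldr (fun x A => setsum (eq x) A) (eq None) ts.

Definition dominates (m : M) (ts : seq S) : Prop :=
  forall w, List.In w ts -> Mle (sabs w) m.

Definition has_opposite_top (ts : seq S) : Prop :=
  exists x y, List.In x ts /\ List.In y ts /\ opposite x y /\ dominates (sabs x) ts.

Lemma hsum_cons h ts z : hsum (h :: ts) z <-> exists2 b, hsum ts b & hadd h b z.
Proof. by split=> [[_ [b [<- [tsb hbz]]]]|[b tsb hbz]]; [exists b|exists h, b]. Qed.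

Lemma dominates_cons m h ts :
  dominates m (h :: ts) <-> Mle (sabs h) m /\ dominates m ts.
Proof.
split=> [dom|[hm dom] w [<-|tw]] //; last exact: dom.
by split=> [|w tw]; apply: dom; [left|right].
Qed.

Lemma dominates_le m m' ts : Mle m m' -> dominates m ts -> dominates m' ts.
Proof. by move=> mm' dom w /dom wm; exact: Mle_trans wm mm'. Qed.

Lemma hsum_le ts m z : dominates m ts -> hsum ts z -> Mle (sabs z) m.
Proof.
elim: ts z => [|h ts IH] z; first by move=> _ <-; exact: Mle_bot.
case/dominates_cons=> hm dom /hsum_cons [b tsb hbz].
exact: hadd_le_max hbz hm (IH _ dom tsb).
Qed.

Lemma hsum_exists_le ts m : dominates m ts -> exists2 b, hsum ts b & Mle (sabs b) m.
Proof.
elim: ts => [|h ts IH]; first by exists None => //; exact: Mle_bot.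
case/dominates_cons=> hm /IH [b tsb bm].
case: (Mle_total (sabs b) (sabs h)) => [bh|hb].
- by exists h => //; apply/hsum_cons; exists b => //; exact: hadd_left.
- by exists b => //; apply/hsum_cons; exists b => //; apply: hadd_right; left.
Qed.

Lemma hsum_top ts y : List.In y ts -> dominates (sabs y) ts -> hsum ts y.
Proof.
elim: ts => [|h ts IH] //= ty /dominates_cons [hy dom]; apply/hsum_cons.
case: ty => [hy'|ty].
- subst h; have [b tsb b_y] := hsum_exists_le dom.
  by exists b => //; exact: hadd_left.
- by exists y; [exact: IH|exact: hadd_right].
Qed.

Lemma hsum_ball ts x y z : List.In x ts -> List.In y ts -> opposite x y ->
  dominates (sabs x) ts -> Mle (sabs z) (sabs x) -> hsum ts z.
Proof.
elim: ts z => [|h ts IH] z //= tx ty xy /dominates_cons [hx dom] zx; apply/hsum_cons.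
have yx := opposite_sabs xy.
case: tx => [hx'|tx]; case: ty => [hy|ty].
- by case: (opposite_neq xy); rewrite -hx' -hy.
- subst h; exists y; first by apply: hsum_top; rewrite -?yx.
  by do 3 right.
- subst h; exists x; first exact: hsum_top.
  by do 3 right; split; [exact: opposite_sym|rewrite -yx].
- case: (Mle_total (sabs z) (sabs h)) => [zh|hz].
  + exists (sopp h); last exact: hadd_sopp.
    by apply: IH => //; rewrite sabs_sopp.
  + by exists z; [exact: IH|apply: hadd_right; left].
Qed.

Lemma hsum_cases ts z : hsum ts z -> has_opposite_top ts \/
  ((z = None \/ List.In z ts) /\ dominates (sabs z) ts).
Proof.
elim: ts z => [|h ts IH] z; first by move=> <-; right; split; [left|].
case/hsum_cons=> b tsb hbz.
case: (IH _ tsb) => [[x [y [tx [ty [xy dom]]]]]|[bts dom]].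
- case: (Mle_total (sabs h) (sabs x)) => [hx|xh].
    by left; exists x, y; do 2 (split; first by right); split; last exact/dominates_cons.
  have bx := hsum_le dom tsb.
  have hb_absurd : ~ Mle (sabs h) (sabs b).
    by move=> hb; exact: Mlt_Mle_False xh (Mle_trans hb bx).
  case/hadd_cases: hbz => [[_ ->]|[[/hb_absurd //]|[/opposite_sabs hb _]]].
  + right; split; first by right; left.
    apply/dominates_cons; split; first exact: Mle_refl.
    by apply: dominates_le dom; left.
  + by case: hb_absurd; rewrite hb; exact: Mle_refl.
- case/hadd_cases: hbz => [[bh ->]|[[hb ->]|[hb _]]].
  + right; split; first by right; left.
    by apply/dominates_cons; split; [exact: Mle_refl|exact: dominates_le dom].
  + right; split; first by case: bts => [->|tb]; [left|right; right].
    exact/dominates_cons.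
  + left; exists h, b; split; first by left.
    split; first by case: bts => [/(opposite_neq_None hb)|tb]; last right.
    split=> //; apply/dominates_cons; split; first exact: Mle_refl.
    by rewrite (opposite_sabs hb).
Qed.

Lemma hsum_zero ts : hsum ts None <-> dominates None ts \/ has_opposite_top ts.
Proof.
split=> [/hsum_cases [|[_ dom]]|[dom|[x [y [tx [ty [xy dom]]]]]]]; [by right|by left| |].
- have [b tsb /Mle_bot_eq/sabs_None b0] := hsum_exists_le dom.
  by rewrite -b0.
- exact: (@hsum_ball _ x y None tx ty xy dom (Mle_bot _)).
Qed.

Lemma spow_pos t e : spow (Some (t, true)) e = Some (INR e * t, true)%R.
Proof.
elim: e => [|e IH]; first by rewrite /spow /= /sone Rmult_0_l.
by rewrite /spow iterS -/(spow _ e) IH S_INR /=; do 2 f_equal; lra.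
Qed.

Lemma spow_s_emb x e : spow (s_emb x) e = s_emb (if e == 0 then Some 0%R
  else if x is Some t then Some (INR e * t)%R else None).
Proof. by case: e => [|e] //; case: x => [t|]; [rewrite spow_pos|rewrite /spow iterS]. Qed.

Lemma term_eval_phi n c p (I : 'I_n -> nat) a :
  term_eval (Some (c, p)) I (phi a) = signed (mono_eval c I a) p.
Proof.
rewrite /term_eval /mono_eval.
set m := \big[Mmul/Some 0%R]_(l < n) _.
have -> : \big[smul/sone]_(l < n) spow (phi a l) (I l) = s_emb m.
  apply: (big_ind2 (fun u v => u = s_emb v)) => //.
    by move=> u1 u2 v1 v2 -> ->; case: u2 => [?|]; case: v2 => [?|].
  by move=> l _; rewrite /phi spow_s_emb.
by case: m => [v|]; case: p.
Qed.

Lemma phi_inj n : injective (@phi n).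
Proof.
move=> a b ab; apply: functional_extensionality => l.
move: (congr1 (fun z => z l) ab); rewrite /phi.
by case: (a l) => [?|]; case: (b l) => [?|] //= [->].
Qed.

Lemma In_enum (T : finType) (x : T) : List.In x (enum T).
Proof.
have : x \in enum T by rewrite mem_enum.
by elim: (enum T) => //= y s IH; rewrite in_cons => /orP [/eqP ->|/IH]; [left|right].
Qed.

Section TildePolynomials.

Variables (n k : nat) (c : 'I_k -> R) (I : 'I_k -> 'I_n -> nat).

Definition tilde_values (i : 'I_k) (a : 'I_n -> M) : seq S :=
  [seq signed (mono_eval (c j) (I j) a) (j != i) | j <- enum 'I_k].

Lemma V_ftilde_phi i a : V_ftilde c I i (phi a) <-> hsum (tilde_values i a) None.
Proof.
have <- : [seq term_eval (ftilde_coef c i j) (I j) (phi a) | j <- enum 'I_k] =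
          tilde_values i a by apply: eq_map => j; rewrite term_eval_phi.
by rewrite /hsum foldr_map.
Qed.

Lemma In_tilde_values i a w :
  List.In w (tilde_values i a) <-> exists j, w = signed (mono_eval (c j) (I j) a) (j != i).
Proof.
rewrite List.in_map_iff.
by split=> [[j [<- _]]|[j ->]]; exists j; [|split; last exact: In_enum].
Qed.

Lemma dominates_tilde_values i a m :
  dominates m (tilde_values i a) <-> forall j, Mle (mono_eval (c j) (I j) a) m.
Proof.
split=> [dom j|dom w /In_tilde_values [j ->]]; last by rewrite sabs_signed.
rewrite -(sabs_signed (mono_eval (c j) (I j) a) (j != i)).
by apply/dom/In_tilde_values; exists j.
Qed.

Lemma V_ftilde_trop_V i a : V_ftilde c I i (phi a) -> trop_V c I a.
Proof.
case/V_ftilde_phi/hsum_zero => [/dominates_tilde_values dom|[x [y [tx [ty [xy dom]]]]]].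
  by left=> j; apply: Mle_bot_eq.
move/In_tilde_values: tx => [j Ex]; move/In_tilde_values: ty => [l Ey].
subst x y; move/dominates_tilde_values: dom => dom.
right; exists j, l; split; first by move=> jl; apply: (opposite_neq xy); rewrite jl.
split; last by move=> m; move: (dom m); rewrite sabs_signed.
by move/opposite_sabs: xy; rewrite !sabs_signed.
Qed.

Lemma trop_V_V_ftilde a : 0 < k -> trop_V c I a -> exists i, V_ftilde c I i (phi a).
Proof.
move=> k_gt0 [all_bot|[i [j [ij [ij_eq top]]]]].
  exists (Ordinal k_gt0); apply/V_ftilde_phi/hsum_zero; left.
  by apply/dominates_tilde_values => l; rewrite all_bot; exact: Mle_refl.
exists i; apply/V_ftilde_phi/hsum_zero.
case Ei: (mono_eval (c i) (I i) a) => [t|]; last first.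
  by left; apply/dominates_tilde_values; rewrite -Ei.
right; exists (signed (Some t) (i != i)), (signed (Some t) (j != i)).
split; first by apply/In_tilde_values; exists i; rewrite Ei.
split; first by apply/In_tilde_values; exists j; rewrite -ij_eq Ei.
have -> : j != i by apply/eqP => ji; apply: ij.
rewrite eqxx; split; first exact: opposite_signed.
by apply/dominates_tilde_values; rewrite sabs_signed -Ei.
Qed.

End TildePolynomials.

Theorem proposition4p14 (n k : nat) (c : 'I_k -> R) (I : 'I_k -> 'I_n -> nat)
    (hk : 0 < k) (hI : forall i j : 'I_k, I i = I j -> i = j) :
  (forall z : 'I_n -> S,
     (exists a : 'I_n -> M, trop_V c I a /\ z = phi a) <->
     (HV c I z /\ exists a : 'I_n -> M, z = phi a)) /\
  (forall a b : 'I_n -> M, phi a = phi b -> a = b).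
Proof.
split; last exact: phi_inj.
move=> z; split=> [[a [ta ->]]|[[i vi] [a za]]].
- by split; [exact: trop_V_V_ftilde|exists a].
- by exists a; split=> //; apply: (V_ftilde_trop_V (i := i)); rewrite -za.
Qed.
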